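(* Fix integers $n,d,k\ge1$. For each layer $l\ge0$ let $\alpha^V_l,\alpha^Q_l,\alpha^K_l,\alpha^R_l$ be scalars and $W^{V,\Phi}_l,W^{Q,\Phi}_l,W^{K,\Phi}_l,W^{R,\Phi}_l\in\mathbb{R}^{2k\times2k}$. For $B\in\mathbb{R}^{n\times d}$ and $\Phi\in\mathbb{R}^{n\times 2k}$ define $B_0=B$, $\Phi_0=\Phi$ and $$B_{l+1}^\top=(1+\alpha^R_l)B_l^\top+\alpha^V_l B_l^\top\left(\alpha^Q_l\alpha^K_l B_lB_l^\top+\Phi_l (W^{Q,\Phi}_l)^\top W^{K,\Phi}_l\Phi_l^\top\right),$$ $$\Phi_{l+1}^\top=(I+W^{R,\Phi}_l)\Phi_l^\top+W^{V,\Phi}_l\Phi_l^\top\left(\alpha^Q_l\alpha^K_l B_lB_l^\top+\Phi_l (W^{Q,\Phi}_l)^\top W^{K,\Phi}_l\Phi_l^\top\right).$$ Let $\mathrm{TF}^B_l(B,\Phi):=B_l^\top$ and $\mathrm{TF}^\Phi_l(B,\Phi):=\Phi_l^\top$. Then for every permutation matrix $U\in\mathbb{R}^{d\times d}$ and every layer $l$, $$\mathrm{TF}^B_l(BU,\Phi)=U^\top\,\mathrm{TF}^B_l(B,\Phi),\qquad \mathrm{TF}^\Phi_l(BU,\Phi)=\mathrm{TF}^\Phi_l(B,\Phi).$$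
   Context: Here $B$ plays the role of a graph incidence matrix with $n$ vertices and $d$ edges, and right-multiplication by a permutation matrix $U\in\mathbb{R}^{d\times d}$ permutes the edge indices. *)

From mathcomp Require Import all_boot all_algebra all_fingroup.
Set Implicit Arguments. Unset Strict Implicit. Unset Printing Implicit Defensive.
Import GRing.Theory.
Local Open Scope ring_scope.

(* One layer of the transformer, acting on the transposed state
   (B_l^T : d x n, Phi_l^T : 2k x n). *)
Definition tf_step (R : ringType) (n d k : nat)
  (aV aQ aK aR : R) (WV WQ WK WR : 'M[R]_(k.*2))
  (st : 'M[R]_(d, n) * 'M[R]_(k.*2, n)) : 'M[R]_(d, n) * 'M[R]_(k.*2, n) :=
  let BT := st.1 in let PhT := st.2 in
  let A : 'M[R]_n := (aQ * aK) *: (BT^T *m BT) + PhT^T *m (WQ^T *m WK) *m PhT in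
  ((1 + aR) *: BT + aV *: (BT *m A),
   (1%:M + WR) *m PhT + WV *m PhT *m A).

Fixpoint tf_layers (R : ringType) (n d k : nat)
  (aV aQ aK aR : nat -> R) (WV WQ WK WR : nat -> 'M[R]_(k.*2))
  (B : 'M[R]_(n, d)) (Phi : 'M[R]_(n, k.*2)) (l : nat)
  : 'M[R]_(d, n) * 'M[R]_(k.*2, n) :=
  match l with
  | 0 => (B^T, Phi^T)
  | l'.+1 => tf_step (aV l') (aQ l') (aK l') (aR l') (WV l') (WQ l') (WK l') (WR l')
               (tf_layers aV aQ aK aR WV WQ WK WR B Phi l')
  end.

Definition TF_B (R : ringType) n d k aV aQ aK aR WV WQ WK WR
  (B : 'M[R]_(n, d)) (Phi : 'M[R]_(n, k.*2)) l : 'M[R]_(d, n) :=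
  (@tf_layers R n d k aV aQ aK aR WV WQ WK WR B Phi l).1.
Definition TF_Phi (R : ringType) n d k aV aQ aK aR WV WQ WK WR
  (B : 'M[R]_(n, d)) (Phi : 'M[R]_(n, k.*2)) l : 'M[R]_(k.*2, n) :=
  (@tf_layers R n d k aV aQ aK aR WV WQ WK WR B Phi l).2.

From mathcomp Require Import all_boot all_algebra all_fingroup.

(* Each layer sees B only through the Gram matrix B_l B_l^T, which does not
   change when B_l^T is multiplied on the left by an orthogonal matrix, and the
   update of B_l^T is a left multiple of B_l^T.  So B |-> B U with U orthogonal
   (e.g. a permutation matrix) rotates every B_l^T by U^T and fixes every
   Phi_l^T, by induction on the layer. *)

Set Implicit Arguments.
Unset Strict Implicit.
Unset Printing Implicit Defensive.

Import GRing.Theory.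
Local Open Scope ring_scope.

Section OrthogonalInvariance.

Variables (R : comNzRingType) (n d k : nat) (U : 'M[R]_d).
Hypothesis U_orthogonal : U *m U^T = 1%:M.

Lemma gram_trmx_mull (BT : 'M[R]_(d, n)) :
  (U^T *m BT)^T *m (U^T *m BT) = BT^T *m BT.
Proof.
by rewrite trmx_mul trmxK mulmxA -(mulmxA BT^T) U_orthogonal mulmx1.
Qed.

Lemma tf_step_trmx_mull (aV aQ aK aR : R) (WV WQ WK WR : 'M[R]_(k.*2))
    (st : 'M[R]_(d, n) * 'M[R]_(k.*2, n)) :
  tf_step aV aQ aK aR WV WQ WK WR (U^T *m st.1, st.2)
    = (U^T *m (tf_step aV aQ aK aR WV WQ WK WR st).1,
       (tf_step aV aQ aK aR WV WQ WK WR st).2).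
Proof.
case: st => BT PhT; rewrite /tf_step /= gram_trmx_mull; congr (_, _).
by rewrite [RHS]mulmxDr -![in RHS]scalemxAr (mulmxA U^T BT).
Qed.

Lemma tf_layers_mulmxr (aV aQ aK aR : nat -> R) (WV WQ WK WR : nat -> 'M[R]_(k.*2))
    (B : 'M[R]_(n, d)) (Phi : 'M[R]_(n, k.*2)) (l : nat) :
  tf_layers aV aQ aK aR WV WQ WK WR (B *m U) Phi l
    = (U^T *m (tf_layers aV aQ aK aR WV WQ WK WR B Phi l).1,
       (tf_layers aV aQ aK aR WV WQ WK WR B Phi l).2).
Proof.
elim: l => [|l IHl] /=; first by rewrite trmx_mul.
by rewrite IHl tf_step_trmx_mull.
Qed.

End OrthogonalInvariance.

Lemma perm_mx_mulmx_tr (R : pzRingType) (d : nat) (s : 'S_d) :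
  perm_mx s *m (perm_mx s)^T = 1%:M :> 'M[R]_d.
Proof. by rewrite tr_perm_mx -perm_mxM mulgV perm_mx1. Qed.

Theorem lemma9 (R : realFieldType) (n d k : nat) (hn : (1 <= n)%N) (hd : (1 <= d)%N)
  (hk : (1 <= k)%N)
  (aV aQ aK aR : nat -> R) (WV WQ WK WR : nat -> 'M[R]_(k.*2))
  (B : 'M[R]_(n, d)) (Phi : 'M[R]_(n, k.*2)) (s : 'S_d) (l : nat) :
  TF_B aV aQ aK aR WV WQ WK WR (B *m perm_mx s) Phi l
    = (perm_mx s)^T *m TF_B aV aQ aK aR WV WQ WK WR B Phi l
  /\ TF_Phi aV aQ aK aR WV WQ WK WR (B *m perm_mx s) Phi l
    = TF_Phi aV aQ aK aR WV WQ WK WR B Phi l.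
Proof.
by rewrite /TF_B /TF_Phi (tf_layers_mulmxr (perm_mx_mulmx_tr R s)).
Qed.
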